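(* Let $a>0$, let $q\in C^{1}[-a,a]$ be complex-valued, and let $f\in C^{2}[-a,a]$ be a solution of $f''-qf=0$ with $f(x)\neq0$ for all $x\in[-a,a]$ and $f(0)=1$; put $h:=f'(0)$. Let $K(x,t)$ be the solution of the Goursat problem $\big(\partial_x^{2}-q(x)\big)K=\partial_t^{2}K$, $K(x,x)=\frac12\int_0^x q(s)\,ds$, $K(x,-x)=0$, let $$\mathbf{K}(x,t;h)=\frac{h}{2}+K(x,t)+\frac{h}{2}\int_{t}^{x}\big(K(x,s)-K(x,-s)\big)\,ds,$$ and $\mathbf{T}u(x)=u(x)+\int_{-x}^{x}\mathbf{K}(x,t;h)u(t)\,dt$. Let $\{\varphi_k\}$ be the functions built from $f$ with base point $x_0=0$ (see context). Then $\mathbf{T}[x^k]=\varphi_k$ for every $k\in\mathbb{N}_0$, and $$\Big(-\frac{d^{2}}{dx^{2}}+q(x)\Big)\mathbf{T}[u]=\mathbf{T}\Big[-\frac{d^{2}u}{dx^{2}}\Big]\qquad\text{for every }u\in C^{2}[-a,a].$$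
   Context: Given a nonvanishing $f\in C^2$ on an interval containing $x_0$, define $\widetilde{X}^{(0)}\equiv X^{(0)}\equiv1$ and for $n\ge1$: $\widetilde{X}^{(n)}(x)=n\int_{x_0}^{x}\widetilde{X}^{(n-1)}(s)(f^{2}(s))^{(-1)^{n-1}}ds$, $X^{(n)}(x)=n\int_{x_0}^{x}X^{(n-1)}(s)(f^{2}(s))^{(-1)^{n}}ds$; set $\varphi_k=fX^{(k)}$ for odd $k$ and $\varphi_k=f\widetilde{X}^{(k)}$ for even $k$. *)

From Stdlib Require Import Reals.
From Coquelicot Require Import Coquelicot.

Open Scope C_scope.

Definition CDeriv (f : R -> C) (x : R) (l : C) : Prop :=
  @is_derive R_AbsRing C_R_NormedModule f x l.

Definition CInt (f : R -> C) (a b : R) : C :=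
  @RInt C_R_CompleteNormedModule f a b.

Definition Ccont (f : R -> C) (x : R) : Prop :=
  @continuous R_UniformSpace C_R_NormedModule f x.

Definition Ccont2 (K : R -> R -> C) (x t : R) : Prop :=
  @continuous (prod_UniformSpace R_UniformSpace R_UniformSpace) C_R_NormedModule
    (fun p : R * R => K (fst p) (snd p)) (x, t).

Definition cfun_C1 (f f1 : R -> C) : Prop :=
  (forall x, CDeriv f x (f1 x)) /\ (forall x, Ccont f1 x).

Definition cfun_C2 (f f1 f2 : R -> C) : Prop :=
  (forall x, CDeriv f x (f1 x)) /\ (forall x, CDeriv f1 x (f2 x)) /\
  (forall x, Ccont f2 x).

Definition cfun2_C2 (K Kxx Ktt : R -> R -> C) : Prop :=
  exists Kx Kt Kxt Ktx : R -> R -> C,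
    (forall x t, CDeriv (fun y => K y t) x (Kx x t)) /\
    (forall x t, CDeriv (fun s => K x s) t (Kt x t)) /\
    (forall x t, CDeriv (fun y => Kx y t) x (Kxx x t)) /\
    (forall x t, CDeriv (fun s => Kx x s) t (Kxt x t)) /\
    (forall x t, CDeriv (fun y => Kt y t) x (Ktx x t)) /\
    (forall x t, CDeriv (fun s => Kt x s) t (Ktt x t)) /\
    (forall x t, Ccont2 K x t /\ Ccont2 Kx x t /\ Ccont2 Kt x t /\
       Ccont2 Kxx x t /\ Ccont2 Kxt x t /\ Ccont2 Ktx x t /\ Ccont2 Ktt x t).

Fixpoint Xtil (f : R -> C) (x0 : R) (n : nat) : R -> C :=
  match n with
  | O => fun _ => 1
  | S m => fun x => RtoC (INR (S m)) *
      CInt (fun s => Xtil f x0 m s *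
              (if Nat.even m then f s * f s else / (f s * f s))) x0 x
  end.
(* exponent (-1)^(n-1) with n = m+1 is (-1)^m: f^2 if m even, f^-2 if m odd *)

Fixpoint Xn (f : R -> C) (x0 : R) (n : nat) : R -> C :=
  match n with
  | O => fun _ => 1
  | S m => fun x => RtoC (INR (S m)) *
      CInt (fun s => Xn f x0 m s *
              (if Nat.even m then / (f s * f s) else f s * f s)) x0 x
  end.
(* exponent (-1)^n with n = m+1 is (-1)^(m+1): f^-2 if m even, f^2 if m odd *)

Definition phik (f : R -> C) (x0 : R) (k : nat) : R -> C :=
  fun x => if Nat.odd k then f x * Xn f x0 k x else f x * Xtil f x0 k x.

Definition boldK (K : R -> R -> C) (h : C) (x t : R) : C :=
  h / 2 + K x t + h / 2 * CInt (fun s => K x s - K x (- s)%R) t x.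

Definition Top (K : R -> R -> C) (h : C) (u : R -> C) (x : R) : C :=
  u x + CInt (fun t => boldK K h x t * u t) (- x) x.

(** Integrating by parts in the inner integral of the kernel [boldK] factors the
    operator as [T = T_K ∘ S_h], with [T_K w (x) = w x + ∫_{-x}^x K(x,t) w(t) dt]
    and [S_h u (t) = u t + h/2 ∫_{-t}^t u]. The operator [S_h] commutes with [d²/dx²].
    Differentiating [T_K w] twice and integrating [K ∂_t² w] by parts twice leaves
    boundary terms on the diagonals [t = ±x]; differentiating the Goursat data along
    them gives [2 (∂_x K + ∂_t K)(x, x) = q x] and [(∂_x K - ∂_t K)(x, -x) = 0], which
    together with the PDE yield [(-D² + q) T_K = T_K (-D²)], hence the same for [T].

    For the monomials, [P_k = T[x^k]] then satisfies [P_k'' = q P_k + k (k-1) P_{k-2}]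
    with [P_k(0) = δ_{k0}] and [P_k'(0) = δ_{k1} + h δ_{k0}]. Writing [P_k = f B] and
    using [f'' = q f] reduces this to two first-order equations whose solution, by
    the recursive definitions of [X^(n)] and [X~^(n)], is [B = X^(k)] or [X~^(k)]
    according to the parity of [k]; induction on [k] gives [P_k = φ_k]. *)

From Stdlib Require Import Reals Lra Lia.
From Coquelicot Require Import Coquelicot.
Open Scope C_scope.

(** * Complex-valued functions of a real variable *)

Lemma CDeriv_split (f : R -> C) x l :
  CDeriv f x l <->
  is_derive (fun y => fst (f y)) x (fst l) /\ is_derive (fun y => snd (f y)) x (snd l).
Proof.
  unfold CDeriv, is_derive; split.
  - intro H; split.
    + eapply filterdiff_ext_lin.
      * apply (filterdiff_comp' f (fun z : C_R_NormedModule => fst z)); [exact H|].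
        apply filterdiff_linear, (@is_linear_fst R_AbsRing R_NormedModule R_NormedModule).
      * reflexivity.
    + eapply filterdiff_ext_lin.
      * apply (filterdiff_comp' f (fun z : C_R_NormedModule => snd z)); [exact H|].
        apply filterdiff_linear, (@is_linear_snd R_AbsRing R_NormedModule R_NormedModule).
      * reflexivity.
  - intros [H1 H2].
    apply (filterdiff_ext (fun y => (fst (f y), snd (f y)) : C_R_NormedModule)).
    { intro y; destruct (f y); reflexivity. }
    eapply filterdiff_ext_lin.
    + refine (@filterdiff_comp_2 R_AbsRing R_NormedModule R_NormedModule R_NormedModule
        C_R_NormedModule (locally x) _ (fun y => fst (f y)) (fun y => snd (f y))
        (fun a b => (a, b) : C) (fun y => scal y (fst l)) (fun y => scal y (snd l))
        (fun a b => (a, b) : C) H1 H2 _).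
      apply filterdiff_linear, (is_linear_ext (fun t => t)); [now intros []|].
      apply is_linear_id.
    + intro y; destruct l; reflexivity.
Qed.

Lemma scal_C (r : R) (z : C) : @scal R_AbsRing C_R_NormedModule r z = RtoC r * z.
Proof.
  destruct z; unfold RtoC, Cmult, scal; simpl; unfold prod_scal, scal, mult; simpl.
  unfold mult; simpl; f_equal; ring.
Qed.

Lemma RtoC_opp1 : RtoC (-1) = - RtoC 1.
Proof. unfold RtoC, Copp; simpl; f_equal; ring. Qed.

Lemma CDeriv_ext (f g : R -> C) x l :
  (forall y, f y = g y) -> CDeriv f x l -> CDeriv g x l.
Proof. intros H D; eapply is_derive_ext; eauto. Qed.

Lemma CDeriv_val (f : R -> C) x l l' : CDeriv f x l -> l = l' -> CDeriv f x l'.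
Proof. now intros H <-. Qed.

Lemma CDeriv_const (c : C) x : CDeriv (fun _ => c) x 0.
Proof. apply (@is_derive_const R_AbsRing C_R_NormedModule). Qed.

Lemma CDeriv_RtoC (g : R -> R) x dg :
  is_derive g x dg -> CDeriv (fun y => RtoC (g y)) x (RtoC dg).
Proof.
  intro H; apply CDeriv_split; simpl; split; [exact H|].
  apply (@is_derive_const R_AbsRing R_NormedModule 0%R).
Qed.

Lemma CDeriv_plus (f g : R -> C) x df dg :
  CDeriv f x df -> CDeriv g x dg -> CDeriv (fun y => f y + g y) x (df + dg).
Proof. apply (is_derive_plus f g). Qed.

Lemma CDeriv_minus (f g : R -> C) x df dg :
  CDeriv f x df -> CDeriv g x dg -> CDeriv (fun y => f y - g y) x (df - dg).
Proof. apply (is_derive_minus f g). Qed.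

Lemma CDeriv_mult (f g : R -> C) x df dg :
  CDeriv f x df -> CDeriv g x dg -> CDeriv (fun y => f y * g y) x (df * g x + f x * dg).
Proof.
  intros H1 H2; apply CDeriv_split in H1, H2; destruct H1 as [A1 B1], H2 as [A2 B2].
  apply CDeriv_split; simpl; split.
  - eapply is_derive_ext; [intro; reflexivity|].
    evar (l : R).
    replace (fst df * fst (g x) - snd df * snd (g x)
             + (fst (f x) * fst dg - snd (f x) * snd dg))%R with l.
    + apply (is_derive_minus (fun y => fst (f y) * fst (g y))%R (fun y => snd (f y) * snd (g y))%R).
      * apply (is_derive_mult (fun y => fst (f y)) (fun y => fst (g y)) x _ _ A1 A2 Rmult_comm).
      * apply (is_derive_mult (fun y => snd (f y)) (fun y => snd (g y)) x _ _ B1 B2 Rmult_comm).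
    + unfold l, minus, plus, opp, mult; simpl; ring.
  - evar (l : R).
    replace (fst df * snd (g x) + snd df * fst (g x)
             + (fst (f x) * snd dg + snd (f x) * fst dg))%R with l.
    + apply (is_derive_plus (fun y => fst (f y) * snd (g y))%R (fun y => snd (f y) * fst (g y))%R).
      * apply (is_derive_mult (fun y => fst (f y)) (fun y => snd (g y)) x _ _ A1 B2 Rmult_comm).
      * apply (is_derive_mult (fun y => snd (f y)) (fun y => fst (g y)) x _ _ B1 A2 Rmult_comm).
    + unfold l, minus, plus, opp, mult; simpl; ring.
Qed.

Lemma CDeriv_comp (f : R -> C) (g : R -> R) x df dg :
  CDeriv f (g x) df -> is_derive g x dg -> CDeriv (fun y => f (g y)) x (RtoC dg * df).
Proof. intros H1 H2; rewrite <- scal_C; apply (is_derive_comp f g x df dg H1 H2). Qed.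

Lemma is_derive_Ropp x : is_derive Ropp x (-1)%R.
Proof. apply (is_derive_ext (fun y => - y)%R); [reflexivity|]. auto_derive; auto; ring. Qed.

Lemma CDeriv_cont (f : R -> C) x l : CDeriv f x l -> Ccont f x.
Proof. intro H; apply ex_derive_continuous; now exists l. Qed.

Lemma CDeriv_inv (g : R -> C) x dg :
  CDeriv g x dg -> g x <> 0 -> CDeriv (fun y => / g y) x (- dg / (g x * g x)).
Proof.
  intros H Hn.
  assert (Hn' : (fst (g x) ^ 2 + snd (g x) ^ 2 <> 0)%R).
  { intro E; apply Hn; destruct (g x) as [u v]; simpl in *.
    assert (u = 0%R) by nra; assert (v = 0%R) by nra; subst; reflexivity. }
  apply CDeriv_split in H; destruct H as [A B].
  set (a := fun y => fst (g y)) in *; set (b := fun y => snd (g y)) in *.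
  assert (N : is_derive (fun y => (a y ^ 2 + b y ^ 2)%R) x
                (2 * a x * fst dg + 2 * b x * snd dg)%R).
  { evar (l : R); replace (2 * a x * fst dg + 2 * b x * snd dg)%R with l.
    - apply (is_derive_plus (fun y => a y ^ 2)%R (fun y => b y ^ 2)%R).
      + apply (is_derive_pow a 2 x _ A).
      + apply (is_derive_pow b 2 x _ B).
    - unfold l, plus; simpl; ring. }
  pose proof (is_derive_inv _ x _ N Hn') as I.
  apply CDeriv_split; split.
  - eapply (is_derive_ext (fun y => a y * / (a y ^ 2 + b y ^ 2))%R); [reflexivity|].
    pose proof (is_derive_mult a _ x _ _ A I Rmult_comm) as D.
    match type of D with is_derive _ _ ?V =>
      replace (fst (- dg / (g x * g x))) with V; [exact D|] end.
    unfold a, b in *; destruct (g x) as [u v], dg as [p r]; simpl in *.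
    unfold mult, plus, opp; simpl; field; repeat split; intro E; apply Hn'; nra.
  - eapply (is_derive_ext (fun y => - b y * / (a y ^ 2 + b y ^ 2))%R); [reflexivity|].
    pose proof (is_derive_mult (fun y => - b y)%R _ x _ _ (is_derive_opp b x _ B) I Rmult_comm)
      as D.
    match type of D with is_derive _ _ ?V =>
      replace (snd (- dg / (g x * g x))) with V; [exact D|] end.
    unfold a, b in *; destruct (g x) as [u v], dg as [p r]; simpl in *.
    unfold mult, plus, opp; simpl; field; repeat split; intro E; apply Hn'; nra.
Qed.

Lemma CDeriv_RtoC_monomial (c : R) (n : nat) x :
  CDeriv (fun t => RtoC (c * t ^ n)) x (RtoC (c * (INR n * x ^ (n - 1)))).
Proof.
  apply CDeriv_RtoC.
  eapply is_derive_ext; [reflexivity|].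
  replace (c * (INR n * x ^ (n - 1)))%R with (scal c (INR n * 1 * x ^ Nat.pred n))%R.
  - apply is_derive_scal, is_derive_pow; auto_derive; auto.
  - unfold scal; simpl; unfold mult; simpl; replace (Nat.pred n) with (n - 1)%nat by lia; ring.
Qed.

Lemma Ccont_split (f : R -> C) x :
  Ccont f x <-> continuous (fun t => fst (f t)) x /\ continuous (fun t => snd (f t)) x.
Proof.
  unfold Ccont; split.
  - intro H; split.
    + apply (continuous_comp f (fun z : C => fst z)); auto.
      destruct (f x); apply (@continuous_fst R_UniformSpace R_UniformSpace).
    + apply (continuous_comp f (fun z : C => snd z)); auto.
      destruct (f x); apply (@continuous_snd R_UniformSpace R_UniformSpace).
  - intros [H1 H2].
    apply (continuous_ext (fun t => (fst (f t), snd (f t)) : C)).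
    { intro t; destruct (f t); reflexivity. }
    apply (@continuous_comp_2 R_UniformSpace R_UniformSpace R_UniformSpace C_R_NormedModule
      (fun t => fst (f t)) (fun t => snd (f t)) (fun a b => (a, b))); auto.
    apply (continuous_ext (fun x => x)); [now intros []|].
    apply continuous_id.
Qed.

Lemma Ccont_plus (f g : R -> C) x : Ccont f x -> Ccont g x -> Ccont (fun y => f y + g y) x.
Proof. apply (@continuous_plus R_UniformSpace R_AbsRing C_R_NormedModule f g). Qed.

Lemma Ccont_minus (f g : R -> C) x : Ccont f x -> Ccont g x -> Ccont (fun y => f y - g y) x.
Proof. apply (@continuous_minus R_UniformSpace R_AbsRing C_R_NormedModule f g). Qed.

Lemma Ccont_opp (f : R -> C) x : Ccont f x -> Ccont (fun y => - f y) x.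
Proof. apply (@continuous_opp R_UniformSpace R_AbsRing C_R_NormedModule f). Qed.

Lemma Ccont_const (c : C) x : Ccont (fun _ => c) x.
Proof. apply continuous_const. Qed.

Lemma Ccont_mult (f g : R -> C) x : Ccont f x -> Ccont g x -> Ccont (fun y => f y * g y) x.
Proof.
  intros H1 H2; apply Ccont_split in H1, H2; destruct H1 as [A B], H2 as [C1 D].
  apply Ccont_split; simpl; split.
  - apply (@continuous_minus R_UniformSpace R_AbsRing R_NormedModule
      (fun y => fst (f y) * fst (g y))%R (fun y => snd (f y) * snd (g y))%R);
      apply (@continuous_mult R_UniformSpace R_AbsRing); auto.
  - apply (@continuous_plus R_UniformSpace R_AbsRing R_NormedModule
      (fun y => fst (f y) * snd (g y))%R (fun y => snd (f y) * fst (g y))%R);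
      apply (@continuous_mult R_UniformSpace R_AbsRing); auto.
Qed.

Lemma Ccont_comp_opp (f : R -> C) x : Ccont f (- x)%R -> Ccont (fun y => f (- y)%R) x.
Proof.
  intro H; apply (continuous_comp Ropp f); auto.
  apply (continuous_ext (fun y : R => opp y)); [reflexivity|].
  apply (@continuous_opp R_UniformSpace R_AbsRing R_NormedModule (fun y => y)), continuous_id.
Qed.

Ltac Ccont_auto := intros; repeat match goal with
  | |- Ccont (fun y => _ * _) _ => apply Ccont_mult
  | |- Ccont (fun y => _ + _) _ => apply Ccont_plus
  | |- Ccont (fun y => _ - _) _ => apply Ccont_minus
  | |- Ccont (fun y => - _) _ => apply Ccont_opp
  | |- Ccont (fun _ => _) _ => apply Ccont_const
  end; auto.

Lemma is_CInt_split (f : R -> C) a b (I : C) :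
  @is_RInt C_R_NormedModule f a b I <->
  is_RInt (fun t => fst (f t)) a b (fst I) /\ is_RInt (fun t => snd (f t)) a b (snd I).
Proof.
  split.
  - intro H; split.
    + apply (@is_RInt_fct_extend_fst R_NormedModule R_NormedModule f a b I H).
    + apply (@is_RInt_fct_extend_snd R_NormedModule R_NormedModule f a b I H).
  - intros [H1 H2]; destruct I as [u v].
    apply (@is_RInt_ext C_R_NormedModule (fun t => (fst (f t), snd (f t)))).
    { intros; destruct (f x); reflexivity. }
    apply (@is_RInt_fct_extend_pair R_NormedModule R_NormedModule _ a b u v H1 H2).
Qed.

Lemma CInt_correct (f : R -> C) a b :
  ex_RInt (V := C_R_CompleteNormedModule) f a b -> @is_RInt C_R_NormedModule f a b (CInt f a b).
Proof. apply (@RInt_correct C_R_CompleteNormedModule). Qed.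

Lemma CInt_unique (f : R -> C) a b I : @is_RInt C_R_NormedModule f a b I -> CInt f a b = I.
Proof. apply (@is_RInt_unique C_R_CompleteNormedModule). Qed.

Lemma ex_CInt_cont (f : R -> C) a b :
  (forall z, (Rmin a b <= z <= Rmax a b)%R -> Ccont f z) ->
  ex_RInt (V := C_R_CompleteNormedModule) f a b.
Proof. apply (@ex_RInt_continuous C_R_CompleteNormedModule). Qed.

Lemma ex_CInt_cont_everywhere (f : R -> C) a b :
  (forall z, Ccont f z) -> ex_RInt (V := C_R_CompleteNormedModule) f a b.
Proof. intro H; apply ex_CInt_cont; auto. Qed.

Lemma CInt_FTC (F f : R -> C) a b :
  (forall x, (Rmin a b <= x <= Rmax a b)%R -> CDeriv F x (f x)) ->
  (forall x, (Rmin a b <= x <= Rmax a b)%R -> Ccont f x) ->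
  CInt f a b = F b - F a.
Proof.
  intros H1 H2; apply CInt_unique, (@is_RInt_derive C_R_CompleteNormedModule F f a b H1 H2).
Qed.

Lemma CInt_scal (f : R -> C) a b c :
  ex_RInt (V := C_R_CompleteNormedModule) f a b -> CInt (fun t => c * f t) a b = c * CInt f a b.
Proof.
  intro H; apply CInt_unique.
  apply CInt_correct, is_CInt_split in H; destruct H as [H1 H2].
  apply is_CInt_split; simpl; split.
  - apply (is_RInt_minus (fun t => fst c * fst (f t))%R (fun t => snd c * snd (f t))%R).
    + apply (is_RInt_scal (fun t => fst (f t)) a b (fst c) _ H1).
    + apply (is_RInt_scal (fun t => snd (f t)) a b (snd c) _ H2).
  - apply (is_RInt_plus (fun t => fst c * snd (f t))%R (fun t => snd c * fst (f t))%R).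
    + apply (is_RInt_scal (fun t => snd (f t)) a b (fst c) _ H2).
    + apply (is_RInt_scal (fun t => fst (f t)) a b (snd c) _ H1).
Qed.

Lemma CInt_plus (f g : R -> C) a b :
  ex_RInt (V := C_R_CompleteNormedModule) f a b -> ex_RInt (V := C_R_CompleteNormedModule) g a b ->
  CInt (fun t => f t + g t) a b = CInt f a b + CInt g a b.
Proof. apply (@RInt_plus C_R_CompleteNormedModule). Qed.

Lemma CInt_minus (f g : R -> C) a b :
  ex_RInt (V := C_R_CompleteNormedModule) f a b -> ex_RInt (V := C_R_CompleteNormedModule) g a b ->
  CInt (fun t => f t - g t) a b = CInt f a b - CInt g a b.
Proof. apply (@RInt_minus C_R_CompleteNormedModule). Qed.

Lemma CInt_opp (f : R -> C) a b :
  ex_RInt (V := C_R_CompleteNormedModule) f a b -> CInt (fun t => - f t) a b = - CInt f a b.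
Proof. apply (@RInt_opp C_R_CompleteNormedModule). Qed.

Lemma CInt_ext (f g : R -> C) a b :
  (forall x, (Rmin a b < x < Rmax a b)%R -> f x = g x) -> CInt f a b = CInt g a b.
Proof. apply (@RInt_ext C_R_CompleteNormedModule). Qed.

Lemma CInt_point (f : R -> C) a : CInt f a a = 0.
Proof. apply (@RInt_point C_R_CompleteNormedModule). Qed.

Lemma CInt_Chasles (f : R -> C) a b c :
  ex_RInt (V := C_R_CompleteNormedModule) f a b -> ex_RInt (V := C_R_CompleteNormedModule) f b c ->
  CInt f a b + CInt f b c = CInt f a c.
Proof. apply (@RInt_Chasles C_R_CompleteNormedModule). Qed.

Lemma CInt_swap (f : R -> C) a b :
  ex_RInt (V := C_R_CompleteNormedModule) f a b -> - CInt f a b = CInt f b a.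
Proof. apply (@opp_RInt_swap C_R_CompleteNormedModule). Qed.

Lemma CInt_sym_comp_opp (f : R -> C) x :
  (forall z, Ccont f z) -> CInt (fun t => f (- t)%R) (- x) x = CInt f (- x) x.
Proof.
  intro H.
  rewrite (CInt_unique _ _ _ (- CInt f x (- x))), CInt_swap; auto using ex_CInt_cont_everywhere.
  apply (@is_RInt_ext C_R_NormedModule (fun y => opp (opp (f (- y)%R)))).
  { intros; apply (@opp_opp C_R_NormedModule). }
  apply (@is_RInt_opp C_R_NormedModule), (@is_RInt_comp_opp C_R_NormedModule).
  rewrite Ropp_involutive; apply CInt_correct, ex_CInt_cont_everywhere, H.
Qed.

Lemma CDeriv_CInt_upper (g : R -> C) c x :
  (forall z, Ccont g z) -> CDeriv (fun y => CInt g c y) x (g x).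
Proof.
  intro H; apply (@is_derive_RInt C_R_NormedModule g _ c x); [|apply H].
  apply filter_forall; intro y; apply CInt_correct, ex_CInt_cont_everywhere, H.
Qed.

Lemma CDeriv_CInt_lower (g : R -> C) c x :
  (forall z, Ccont g z) -> CDeriv (fun y => CInt g y c) x (- g x).
Proof.
  intro H; apply (@is_derive_RInt' C_R_NormedModule g _ x c); [|apply H].
  apply filter_forall; intro y; apply CInt_correct, ex_CInt_cont_everywhere, H.
Qed.

Lemma CDeriv_CInt_sym (g : R -> C) x :
  (forall z, Ccont g z) -> CDeriv (fun y => CInt g (- y)%R y) x (g x + g (- x)%R).
Proof.
  intro H.
  pose proof (@is_derive_RInt_bound_comp C_R_NormedModule g (fun a b => CInt g a b)
                Ropp (fun y => y) (-1)%R 1%R x) as P.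
  eapply CDeriv_val; [apply P|].
  - apply filter_forall; intros; apply CInt_correct, ex_CInt_cont_everywhere, H.
  - apply H.
  - apply H.
  - apply is_derive_Ropp.
  - auto_derive; auto.
  - rewrite !scal_C; change (minus ?u ?v) with (u - v).
    destruct (g x), (g (- x)%R); unfold RtoC, Cmult, Cminus, Cplus, Copp; simpl; f_equal; ring.
Qed.
(** * Functions of two real variables *)

Lemma Ccont2_split (F : R -> R -> C) x t :
  Ccont2 F x t <->
  continuity_2d_pt (fun u v => fst (F u v)) x t /\ continuity_2d_pt (fun u v => snd (F u v)) x t.
Proof.
  unfold Ccont2; rewrite !continuity_2d_pt_filterlim; split.
  - intro H; split.
    + apply (continuous_comp (fun p : R * R => F (fst p) (snd p)) (fun z : C => fst z)); auto.
      simpl; destruct (F x t); apply (@continuous_fst R_UniformSpace R_UniformSpace).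
    + apply (continuous_comp (fun p : R * R => F (fst p) (snd p)) (fun z : C => snd z)); auto.
      simpl; destruct (F x t); apply (@continuous_snd R_UniformSpace R_UniformSpace).
  - intros [H1 H2].
    apply (continuous_ext
             (fun p : R * R => (fst (F (fst p) (snd p)), snd (F (fst p) (snd p))) : C)).
    { intro p; symmetry; apply surjective_pairing. }
    apply (@continuous_comp_2 (prod_UniformSpace R_UniformSpace R_UniformSpace)
             R_UniformSpace R_UniformSpace C_R_NormedModule
             (fun p => fst (F (fst p) (snd p))) (fun p => snd (F (fst p) (snd p)))
             (fun a b => (a, b))); auto.
    apply (continuous_ext (fun x => x)); [now intros []|].
    apply continuous_id.
Qed.

Lemma continuity_2d_pt_slice (F : R -> R -> R) y z :
  continuity_2d_pt F y z -> continuous (fun t => F y t) z.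
Proof.
  rewrite continuity_2d_pt_filterlim; intro H.
  apply (continuous_comp (fun t => (y, t)) (fun p : R * R => F (fst p) (snd p))); [|exact H].
  apply (continuous_comp_2 (fun _ => y) (fun t => t) (fun a b => (a, b))).
  - apply continuous_const.
  - apply continuous_id.
  - apply (continuous_ext (fun x => x)); [now intros []|].
    apply continuous_id.
Qed.

Lemma Ccont2_slice (F : R -> R -> C) y z : Ccont2 F y z -> Ccont (F y) z.
Proof.
  rewrite Ccont2_split, Ccont_split; intros [H1 H2]; split.
  - apply (continuity_2d_pt_slice (fun u v => fst (F u v))), H1.
  - apply (continuity_2d_pt_slice (fun u v => snd (F u v))), H2.
Qed.

Lemma continuity_2d_pt_of_snd (w : R -> R) x t :
  continuous w t -> continuity_2d_pt (fun _ v => w v) x t.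
Proof.
  intro H; apply (continuity_1d_2d_pt_comp w (fun _ v => v)).
  - apply continuity_pt_filterlim, H.
  - apply continuity_2d_pt_id2.
Qed.

Lemma Ccont2_mult_snd (K : R -> R -> C) (w : R -> C) x t :
  Ccont2 K x t -> Ccont w t -> Ccont2 (fun x t => K x t * w t) x t.
Proof.
  intros H1 H2; apply Ccont2_split in H1; apply Ccont_split in H2.
  destruct H1 as [A B], H2 as [C1 D].
  apply Ccont2_split; simpl; split.
  - apply continuity_2d_pt_minus; apply continuity_2d_pt_mult; auto;
      apply continuity_2d_pt_of_snd; auto.
  - apply continuity_2d_pt_plus; apply continuity_2d_pt_mult; auto;
      apply continuity_2d_pt_of_snd; auto.
Qed.

Lemma locally_2d_forall (P : R -> R -> Prop) x y : (forall u v, P u v) -> locally_2d P x y.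
Proof. intro H; exists (mkposreal 1 Rlt_0_1); intros; apply H. Qed.

Lemma is_derive_RInt_sym_param (F Fx : R -> R -> R) :
  (forall x t, is_derive (fun y => F y t) x (Fx x t)) ->
  (forall x t, continuity_2d_pt F x t) -> (forall x t, continuity_2d_pt Fx x t) ->
  forall x, is_derive (fun y => RInt (F y) (- y) y) x (RInt (Fx x) (- x) x + F x (- x) + F x x)%R.
Proof.
  intros HD HF HFx x.
  assert (HI : forall y a b, ex_RInt (F y) a b).
  { intros; apply (@ex_RInt_continuous R_CompleteNormedModule).
    intros; apply continuity_2d_pt_slice; auto. }
  assert (HDer : forall u v, Derive (fun z => F z v) u = Fx u v)
    by (intros; apply is_derive_unique; auto).
  assert (HC : forall u v, continuity_2d_pt (fun u v => Derive (fun z => F z v) u) u v).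
  { intros; eapply continuity_2d_pt_ext; [|apply (HFx u v)].
    intros; simpl; rewrite HDer; auto. }
  pose proof (is_derive_RInt_param_bound_comp F Ropp (fun y => y) x (-1) 1) as P.
  match type of P with _ -> _ -> _ -> _ -> _ -> _ -> _ -> _ -> _ -> _ -> _ -> is_derive _ _ ?V =>
    replace (RInt (Fx x) (- x) x + F x (- x) + F x x)%R with V end.
  - apply P.
    + apply filter_forall; intros; apply HI.
    + exists (mkposreal 1 Rlt_0_1); apply filter_forall; intros; apply HI.
    + exists (mkposreal 1 Rlt_0_1); apply filter_forall; intros; apply HI.
    + apply is_derive_Ropp.
    + auto_derive; auto.
    + exists (mkposreal 1 Rlt_0_1); apply filter_forall; intros; exists (Fx x0 t); auto.
    + intros; apply HC.
    + apply locally_2d_forall; intros; apply HC.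
    + apply locally_2d_forall; intros; apply HC.
    + apply continuity_pt_filterlim, continuity_2d_pt_slice; auto.
    + apply continuity_pt_filterlim, continuity_2d_pt_slice; auto.
  - rewrite (RInt_ext (fun t => Derive (fun u => F u t) x) (Fx x)); [ring|].
    intros; apply HDer.
Qed.

Lemma CInt_components (f : R -> C) a b :
  ex_RInt (V := C_R_CompleteNormedModule) f a b ->
  CInt f a b = (RInt (fun t => fst (f t)) a b, RInt (fun t => snd (f t)) a b).
Proof.
  intro H; apply CInt_correct, is_CInt_split in H; destruct H as [I1 I2].
  rewrite (is_RInt_unique _ _ _ _ I1), (is_RInt_unique _ _ _ _ I2).
  apply surjective_pairing.
Qed.

Lemma CDeriv_CInt_sym_param (F Fx : R -> R -> C) :
  (forall x t, CDeriv (fun y => F y t) x (Fx x t)) ->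
  (forall x t, Ccont2 F x t) -> (forall x t, Ccont2 Fx x t) ->
  forall x, CDeriv (fun y => CInt (F y) (- y)%R y) x
              (CInt (Fx x) (- x)%R x + F x (- x)%R + F x x).
Proof.
  intros HD HF HFx x.
  assert (HI : forall G, (forall x t, Ccont2 G x t) ->
                 forall y a b, ex_RInt (V := C_R_CompleteNormedModule) (G y) a b)
    by (intros; apply ex_CInt_cont_everywhere; intros; apply Ccont2_slice; auto).
  apply (CDeriv_ext (fun y => (RInt (fun t => fst (F y t)) (- y)%R y,
                               RInt (fun t => snd (F y t)) (- y)%R y))).
  { intro y; rewrite CInt_components; auto. }
  rewrite (CInt_components (Fx x)) by auto.
  apply CDeriv_split; simpl; split.
  - apply (is_derive_RInt_sym_param (fun u v => fst (F u v)) (fun u v => fst (Fx u v)));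
      intros; [apply CDeriv_split | apply Ccont2_split | apply Ccont2_split]; auto.
  - apply (is_derive_RInt_sym_param (fun u v => snd (F u v)) (fun u v => snd (Fx u v)));
      intros; [apply CDeriv_split | apply Ccont2_split | apply Ccont2_split]; auto.
Qed.

Lemma is_derive_comp_2d (F Fx Ft : R -> R -> R) :
  (forall x t, is_derive (fun y => F y t) x (Fx x t)) ->
  (forall x t, is_derive (fun s => F x s) t (Ft x t)) ->
  (forall x t, continuity_2d_pt Fx x t) ->
  forall x (g : R -> R) dg, is_derive g x dg ->
  is_derive (fun y => F y (g y)) x (Fx x (g x) + dg * Ft x (g x))%R.
Proof.
  intros HDx HDt HC x g dg Hg.
  set (RR := prod_NormedModule R_AbsRing R_NormedModule R_NormedModule).
  assert (FD := is_derive_filterdiff F x (g x) Fx (Ft x (g x))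
                  (filter_forall _ (fun u => HDx (fst u) (snd u))) (HDt x (g x))
                  (proj1 (continuity_2d_pt_filterlim Fx x (g x)) (HC x (g x)))).
  assert (HH : filterdiff (fun y : R => (y, g y) : RR) (locally x)
                 (fun y => (scal y 1%R, scal y dg) : RR)).
  { refine (@filterdiff_comp_2 R_AbsRing R_NormedModule R_NormedModule R_NormedModule RR
              (locally x) _ (fun y => y) g (fun a b => (a, b)) (fun y => scal y 1%R)
              (fun y => scal y dg) (fun a b => (a, b)) _ Hg _).
    - apply (filterdiff_ext_lin _ (fun y => y)); [apply filterdiff_id|].
      intro y; unfold scal; simpl; unfold mult; simpl; symmetry; apply Rmult_1_r.
    - apply filterdiff_linear, (is_linear_ext (fun t => t)); [now intros []|].
      apply is_linear_id. }
  eapply filterdiff_ext_lin.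
  - exact (filterdiff_comp' (fun y : R => (y, g y) : RR)
             (fun u : RR => F (fst u) (snd u)) x _ _ HH FD).
  - intro y; simpl; unfold scal; simpl; unfold mult, plus; simpl; ring.
Qed.

Lemma CDeriv_comp_2d (F Fx Ft : R -> R -> C) :
  (forall x t, CDeriv (fun y => F y t) x (Fx x t)) ->
  (forall x t, CDeriv (fun s => F x s) t (Ft x t)) ->
  (forall x t, Ccont2 Fx x t) ->
  forall x (g : R -> R) dg, is_derive g x dg ->
  CDeriv (fun y => F y (g y)) x (Fx x (g x) + RtoC dg * Ft x (g x)).
Proof.
  intros HDx HDt HC x g dg Hg; apply CDeriv_split; simpl; split.
  - replace (fst (Fx x (g x)) + (dg * fst (Ft x (g x)) - 0 * snd (Ft x (g x))))%R
      with (fst (Fx x (g x)) + dg * fst (Ft x (g x)))%R by ring.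
    apply (is_derive_comp_2d (fun u v => fst (F u v)) (fun u v => fst (Fx u v))
             (fun u v => fst (Ft u v)));
      intros; auto; [apply CDeriv_split | apply CDeriv_split | apply Ccont2_split]; auto.
  - replace (snd (Fx x (g x)) + (dg * snd (Ft x (g x)) + 0 * fst (Ft x (g x))))%R
      with (snd (Fx x (g x)) + dg * snd (Ft x (g x)))%R by ring.
    apply (is_derive_comp_2d (fun u v => snd (F u v)) (fun u v => snd (Fx u v))
             (fun u v => snd (Ft u v)));
      intros; auto; [apply CDeriv_split | apply CDeriv_split | apply Ccont2_split]; auto.
Qed.

(** * Ordinary differential equations on a symmetric interval *)

Lemma CDeriv_zero_const (H : R -> C) a :
  (forall x, (- a <= x <= a)%R -> CDeriv H x 0) ->
  forall x, (- a <= x <= a)%R -> H x = H 0%R.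
Proof.
  intros HD x Hx.
  assert (E : forall c d, (- a <= c)%R -> (c < d)%R -> (d <= a)%R -> H c = H d).
  { intros c d H1 H2 H3; apply (@eq_is_derive C_R_NormedModule); [|exact H2].
    intros t Ht; apply HD; lra. }
  destruct (Rtotal_order x 0) as [L|[L|L]].
  - apply E; lra.
  - subst; reflexivity.
  - symmetry; apply E; lra.
Qed.

(* One-sided difference quotients suffice, so this also holds at the endpoints [x = -a, a]. *)
Lemma is_derive_of_zero_on (h : R -> R) a x l :
  (0 < a)%R -> (forall y, (- a <= y <= a)%R -> h y = 0%R) ->
  (- a <= x <= a)%R -> is_derive h x l -> l = 0%R.
Proof.
  intros Ha H0 Hx D; apply is_derive_Reals in D.
  apply Rabs_eq_0, Rle_antisym; [|apply Rabs_pos].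
  apply le_epsilon; intros eps Heps.
  destruct (D eps Heps) as [d Hd].
  set (e := Rmin (d / 2) a).
  assert (He : (0 < e)%R) by (apply Rmin_pos; destruct d; simpl; lra).
  assert (He2 : (e < d)%R) by (eapply Rle_lt_trans; [apply Rmin_l | destruct d; simpl; lra]).
  assert (Hea : (e <= a)%R) by apply Rmin_r.
  destruct (Rle_lt_dec x 0) as [L|L].
  - assert (Q := Hd e (Rgt_not_eq _ _ He) ltac:(rewrite Rabs_pos_eq; lra)).
    rewrite (H0 x), (H0 (x + e)%R) in Q by lra.
    replace ((0 - 0) / e - l)%R with (- l)%R in Q by (field; lra).
    rewrite Rabs_Ropp in Q; lra.
  - assert (Q := Hd (- e)%R ltac:(intro; lra) ltac:(rewrite Rabs_Ropp, Rabs_pos_eq; lra)).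
    rewrite (H0 x), (H0 (x + - e)%R) in Q by lra.
    replace ((0 - 0) / - e - l)%R with (- l)%R in Q by (field; lra).
    rewrite Rabs_Ropp in Q; lra.
Qed.

Lemma CDeriv_agree_on (F G : R -> C) a x l1 l2 :
  (0 < a)%R -> (forall y, (- a <= y <= a)%R -> F y = G y) ->
  (- a <= x <= a)%R -> CDeriv F x l1 -> CDeriv G x l2 -> l1 = l2.
Proof.
  intros Ha HE Hx D1 D2.
  destruct (proj1 (CDeriv_split _ _ _) (CDeriv_minus F G x l1 l2 D1 D2)) as [A B].
  apply (is_derive_of_zero_on _ a x _ Ha) in A, B; auto.
  - destruct l1, l2; simpl in *; f_equal; lra.
  - intros y Hy; rewrite HE; auto; simpl; ring.
  - intros y Hy; rewrite HE; auto; simpl; ring.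
Qed.

Lemma reduction_of_order (a : R) (q f f1 f2 P P1 P2 r A B : R -> C) :
  (0 < a)%R ->
  (forall x, CDeriv f x (f1 x)) -> (forall x, CDeriv f1 x (f2 x)) ->
  (forall x, (- a <= x <= a)%R -> f2 x = q x * f x) ->
  (forall x, (- a <= x <= a)%R -> f x <> 0) ->
  (forall x, CDeriv P x (P1 x)) -> (forall x, CDeriv P1 x (P2 x)) ->
  (forall x, (- a <= x <= a)%R -> P2 x = q x * P x + f x * r x) ->
  (forall x, (- a <= x <= a)%R -> CDeriv A x (f x * f x * r x)) ->
  A 0%R = P1 0%R * f 0%R - P 0%R * f1 0%R ->
  (forall x, (- a <= x <= a)%R -> CDeriv B x (A x / (f x * f x))) ->
  B 0%R = P 0%R / f 0%R ->
  forall x, (- a <= x <= a)%R -> P x = f x * B x.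
Proof.
  intros Ha Df Df1 Hf2 Hnz DP DP1 HP2 DA A0 DB B0.
  assert (H0 : (- a <= 0 <= a)%R) by lra.
  (* [A] is the Wronskian of [f] and [P] *)
  assert (EW : forall x, (- a <= x <= a)%R -> P1 x * f x - P x * f1 x - A x = 0).
  { assert (D : forall y, (- a <= y <= a)%R ->
                  CDeriv (fun x => P1 x * f x - P x * f1 x - A x) y 0).
    { intros y Hy; eapply CDeriv_val.
      - apply CDeriv_minus; [apply CDeriv_minus; apply CDeriv_mult; auto | apply DA, Hy].
      - rewrite HP2, Hf2 by exact Hy; ring. }
    intros x Hx; pose proof (CDeriv_zero_const _ a D x Hx) as E; cbv beta in E.
    rewrite E, A0; ring. }
  assert (EZ : forall x, (- a <= x <= a)%R -> P x * / f x - B x = 0).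
  { assert (D : forall y, (- a <= y <= a)%R -> CDeriv (fun x => P x * / f x - B x) y 0).
    { intros y Hy; eapply CDeriv_val.
      - apply CDeriv_minus; [apply CDeriv_mult; [apply DP | apply CDeriv_inv; auto] | apply DB, Hy].
      - replace (A y) with (P1 y * f y - P y * f1 y)
          by (rewrite <- (Cplus_0_r (A y)), <- (EW y Hy); ring).
        field; auto. }
    intros x Hx; pose proof (CDeriv_zero_const _ a D x Hx) as E; cbv beta in E.
    rewrite E, B0; unfold Cdiv; ring. }
  intros x Hx.
  replace (B x) with (P x * / f x) by (rewrite <- (Cplus_0_r (B x)), <- (EZ x Hx); ring).
  field; auto.
Qed.

Lemma Ccont_neq0_near (f : R -> C) x0 :
  Ccont f x0 -> f x0 <> 0 -> exists d, (0 < d)%R /\ forall y, (Rabs (y - x0) < d)%R -> f y <> 0.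
Proof.
  intros H N; apply Ccont_split in H.
  assert (Hc : exists g : R -> R, continuous g x0 /\ g x0 <> 0%R /\
                 forall y, g y <> 0%R -> f y <> 0).
  { destruct (Req_dec (fst (f x0)) 0) as [E|E].
    - exists (fun y => snd (f y)); split; [apply H|split].
      + intro E2; apply N; destruct (f x0); simpl in *; subst; reflexivity.
      + intros y Hy E3; apply Hy; rewrite E3; reflexivity.
    - exists (fun y => fst (f y)); split; [apply H|split; [exact E|]].
      intros y Hy E3; apply Hy; rewrite E3; reflexivity. }
  destruct Hc as (g & Cg & Hg0 & Hg).
  assert (Hp : (0 < Rabs (g x0))%R) by (apply Rabs_pos_lt; auto).
  destruct (proj1 (filterlim_locally g (g x0)) Cg (mkposreal _ Hp)) as [d Hd].
  exists d; split; [apply cond_pos|].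
  intros y Hy; apply Hg; intro E; specialize (Hd y Hy).
  change (Rabs (g y - g x0) < Rabs (g x0))%R in Hd.
  rewrite E, Rminus_0_l, Rabs_Ropp in Hd; lra.
Qed.

Lemma neq0_on_larger_interval (f : R -> C) a :
  (0 < a)%R -> (forall z, Ccont f z) -> (forall x, (- a <= x <= a)%R -> f x <> 0) ->
  exists b, (a < b)%R /\ forall y, (- b < y < b)%R -> f y <> 0.
Proof.
  intros Ha Cf Nf.
  destruct (Ccont_neq0_near f a (Cf a) (Nf a ltac:(lra))) as (d1 & Hd1 & N1).
  destruct (Ccont_neq0_near f (- a)%R (Cf (- a)%R) (Nf (- a)%R ltac:(lra))) as (d2 & Hd2 & N2).
  pose proof (Rmin_l d1 d2); pose proof (Rmin_r d1 d2).
  assert (0 < Rmin d1 d2)%R by (apply Rmin_pos; auto).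
  exists (a + Rmin d1 d2)%R; split; [lra|]; intros y Hy.
  destruct (Rle_dec y a), (Rle_dec (- a) y).
  - apply Nf; lra.
  - apply N2; rewrite Rabs_left1; lra.
  - apply N1; rewrite Rabs_pos_eq; lra.
  - lra.
Qed.

Lemma CDeriv_weighted_chain (b : R) (X w : nat -> R -> C) :
  (0 < b)%R -> (forall m x, (- b < x < b)%R -> Ccont (w m) x) ->
  (forall x, X 0%nat x = 1) ->
  (forall m x, X (S m) x = RtoC (INR (S m)) * CInt (fun s => X m s * w m s) 0 x) ->
  forall m x, (- b < x < b)%R -> CDeriv (X (S m)) x (RtoC (INR (S m)) * (X m x * w m x)).
Proof.
  intros Hb Hw H0 HS.
  assert (D : forall m, (forall z, (- b < z < b)%R -> Ccont (X m) z) ->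
            forall x, (- b < x < b)%R -> CDeriv (X (S m)) x (RtoC (INR (S m)) * (X m x * w m x))).
  { intros m Hc x Hx.
    apply (CDeriv_ext (fun y => RtoC (INR (S m)) * CInt (fun s => X m s * w m s) 0 y));
      [intro; rewrite HS; auto|].
    assert (DI : CDeriv (fun y => CInt (fun s => X m s * w m s) 0 y) x (X m x * w m x)).
    { apply (@is_derive_RInt C_R_NormedModule (fun s => X m s * w m s) _ 0 x);
        [|apply Ccont_mult; [apply Hc | apply Hw]; exact Hx].
      assert (He : (0 < Rmin (x + b) (b - x))%R) by (apply Rmin_pos; lra).
      exists (mkposreal _ He); intros y Hy; apply CInt_correct, ex_CInt_cont.
      change (Rabs (y - x) < Rmin (x + b) (b - x))%R in Hy.
      pose proof (Rmin_l (x + b) (b - x)); pose proof (Rmin_r (x + b) (b - x)).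
      apply Rabs_def2 in Hy; intros z Hz; unfold Rmin, Rmax in Hz.
      apply Ccont_mult; [apply Hc | apply Hw]; destruct (Rle_dec 0 y); lra. }
    eapply CDeriv_val; [apply (CDeriv_mult (fun _ => _) _ x _ _ (CDeriv_const _ x) DI) | ring]. }
  assert (C : forall m z, (- b < z < b)%R -> Ccont (X m) z).
  { induction m; intros z Hz.
    - apply (continuous_ext (fun _ => RtoC 1)); [intro; rewrite H0; reflexivity|].
      apply Ccont_const.
    - eapply CDeriv_cont, D; auto. }
  intros m; apply D, C.
Qed.

(** * Factorisation of the transmutation operator *)

Definition TK (K : R -> R -> C) (w : R -> C) (x : R) : C :=
  w x + CInt (fun t => K x t * w t) (- x) x.

Definition Sh (h : C) (u : R -> C) (t : R) : C :=
  u t + h / 2 * CInt u (- t) t.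

Lemma TK_ext (K : R -> R -> C) (w v : R -> C) x :
  (forall t, w t = v t) -> TK K w x = TK K v x.
Proof. intro H; unfold TK; rewrite H; f_equal; apply CInt_ext; intros; rewrite H; auto. Qed.

Lemma CInt_tail_mult (g u : R -> C) x :
  (forall z, Ccont g z) -> (forall z, Ccont u z) -> CInt g (- x) x = 0 ->
  CInt (fun t => CInt g t x * u t) (- x) x = CInt (fun t => g t * CInt u 0 t) (- x) x.
Proof.
  intros Cg Cu Hg.
  assert (CI : forall z, Ccont (fun t => CInt g t x) z).
  { intro z; eapply CDeriv_cont, CDeriv_CInt_lower, Cg. }
  assert (CU : forall z, Ccont (fun t => CInt u 0 t) z).
  { intro z; eapply CDeriv_cont, CDeriv_CInt_upper, Cu. }
  (* integration by parts; the boundary terms vanish since [∫_t^x g = 0] at [t = ±x] *)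
  assert (F : CInt (fun t => - (g t * CInt u 0 t) + CInt g t x * u t) (- x) x = 0).
  { rewrite (CInt_FTC (fun t => CInt g t x * CInt u 0 t)).
    - rewrite CInt_point, Hg; ring.
    - intros t _; eapply CDeriv_val.
      + apply CDeriv_mult; [apply CDeriv_CInt_lower, Cg | apply CDeriv_CInt_upper, Cu].
      + cbv beta; ring.
    - Ccont_auto. }
  rewrite CInt_plus, CInt_opp in F by (apply ex_CInt_cont_everywhere; Ccont_auto).
  rewrite <- (Cplus_0_l (CInt (fun t => g t * CInt u 0 t) (- x) x)), <- F; ring.
Qed.

Lemma CInt_odd_part_mult (k u : R -> C) x :
  (forall z, Ccont k z) -> (forall z, Ccont u z) ->
  CInt (fun t => (k t - k (- t)%R) * CInt u 0 t) (- x) x =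
  CInt (fun t => k t * CInt u (- t)%R t) (- x) x.
Proof.
  intros Ck Cu; set (U := fun t => CInt u 0 t).
  assert (CU : forall z, Ccont U z) by (intro z; eapply CDeriv_cont, CDeriv_CInt_upper, Cu).
  assert (CUo : forall z, Ccont (fun t => U (- t)%R) z) by (intro z; apply Ccont_comp_opp, CU).
  assert (Cko : forall z, Ccont (fun t => k (- t)%R) z) by (intro z; apply Ccont_comp_opp, Ck).
  assert (CUoo : forall z, Ccont (fun t => U (- - t)%R) z)
    by (intro z; apply (Ccont_comp_opp (fun t => U (- t)%R)), CUo).
  rewrite (CInt_ext _ (fun t => k t * U t - k (- t)%R * U (- - t)%R))
    by (intros; rewrite Ropp_involutive; unfold U; ring).
  rewrite CInt_minus, (CInt_sym_comp_opp (fun s => k s * U (- s)%R)), <- CInt_minus;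
    try (intros; apply ex_CInt_cont_everywhere); Ccont_auto.
  apply CInt_ext; intros t _; unfold U.
  rewrite <- (CInt_Chasles u (- t)%R 0 t), <- (CInt_swap u 0 (- t)%R);
    auto using ex_CInt_cont_everywhere.
  ring.
Qed.

Lemma Top_factor (K : R -> R -> C) h u x :
  (forall x t, Ccont2 K x t) -> (forall z, Ccont u z) -> Top K h u x = TK K (Sh h u) x.
Proof.
  intros CK Cu.
  assert (CKx : forall z, Ccont (K x) z) by (intro; apply Ccont2_slice, CK).
  assert (CKo : forall z, Ccont (fun s => K x (- s)%R) z) by (intro; apply Ccont_comp_opp, CKx).
  set (g := fun s => K x s - K x (- s)%R).
  assert (Cg : forall z, Ccont g z) by (unfold g; Ccont_auto).
  assert (CI : forall z, Ccont (fun t => CInt g t x) z)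
    by (intro; eapply CDeriv_cont, CDeriv_CInt_lower, Cg).
  assert (CS : forall z, Ccont (fun t => CInt u (- t)%R t) z)
    by (intro; eapply CDeriv_cont, CDeriv_CInt_sym, Cu).
  assert (Hg : CInt g (- x) x = 0).
  { unfold g; rewrite CInt_minus, (CInt_sym_comp_opp (K x)) by auto using ex_CInt_cont_everywhere.
    ring. }
  unfold Top, TK, Sh, boldK.
  rewrite (CInt_ext _ (fun t => h / 2 * u t + K x t * u t + h / 2 * (CInt g t x * u t)))
    by (intros; unfold g; ring).
  rewrite (CInt_ext (fun t => K x t * _)
             (fun t => K x t * u t + h / 2 * (K x t * CInt u (- t)%R t)))
    by (intros; ring).
  rewrite !CInt_plus, !CInt_scal, CInt_tail_mult by (try apply ex_CInt_cont_everywhere; Ccont_auto).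
  unfold g; rewrite CInt_odd_part_mult by auto.
  ring.
Qed.

Lemma Top_at_0 (K : R -> R -> C) h u : Top K h u 0%R = u 0%R.
Proof. unfold Top; rewrite Ropp_0, CInt_point; ring. Qed.

Lemma Top_ext (K : R -> R -> C) h (u v : R -> C) x :
  (forall t, u t = v t) -> Top K h u x = Top K h v x.
Proof. intro H; unfold Top; rewrite H; f_equal; apply CInt_ext; intros; rewrite H; auto. Qed.

Lemma Top_scal (K : R -> R -> C) h (v : R -> C) c x :
  (forall x t, Ccont2 K x t) -> (forall z, Ccont v z) ->
  Top K h (fun t => c * v t) x = c * Top K h v x.
Proof.
  intros CK Cv.
  assert (CKx : forall z, Ccont (K x) z) by (intro; apply Ccont2_slice, CK).
  assert (CKo : forall z, Ccont (fun s => K x (- s)%R) z) by (intro; apply Ccont_comp_opp, CKx).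
  assert (CB : forall z, Ccont (boldK K h x) z).
  { intro z; unfold boldK; Ccont_auto.
    eapply CDeriv_cont, CDeriv_CInt_lower; Ccont_auto. }
  unfold Top.
  rewrite (CInt_ext _ (fun t => c * (boldK K h x t * v t))) by (intros; ring).
  rewrite CInt_scal by (apply ex_CInt_cont_everywhere; Ccont_auto).
  ring.
Qed.

Lemma CDeriv_Sh h (u u1 : R -> C) x :
  (forall x, CDeriv u x (u1 x)) -> CDeriv (Sh h u) x (u1 x + h / 2 * (u x + u (- x)%R)).
Proof.
  intros Du; apply CDeriv_plus; [apply Du|].
  eapply CDeriv_val.
  - apply (CDeriv_mult (fun _ => h / 2)); [apply CDeriv_const|].
    apply CDeriv_CInt_sym; intro; eapply CDeriv_cont, Du.
  - ring.
Qed.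

Lemma CDeriv_dSh h (u u1 u2 : R -> C) x :
  (forall x, CDeriv u x (u1 x)) -> (forall x, CDeriv u1 x (u2 x)) ->
  CDeriv (fun t => u1 t + h / 2 * (u t + u (- t)%R)) x (u2 x + h / 2 * (u1 x - u1 (- x)%R)).
Proof.
  intros Du Du1; apply CDeriv_plus; [apply Du1|].
  eapply CDeriv_val.
  - apply (CDeriv_mult (fun _ => h / 2)); [apply CDeriv_const|].
    apply CDeriv_plus; [apply Du|].
    apply (CDeriv_comp u Ropp x _ _ (Du (- x)%R) (is_derive_Ropp x)).
  - rewrite RtoC_opp1; ring.
Qed.

Lemma Sh_opp_second_deriv h (u1 u2 : R -> C) t :
  (forall x, CDeriv u1 x (u2 x)) -> (forall z, Ccont u2 z) ->
  Sh h (fun s => - u2 s) t = - (u2 t + h / 2 * (u1 t - u1 (- t)%R)).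
Proof.
  intros Du1 Cu2; unfold Sh.
  rewrite CInt_opp, (CInt_FTC u1 u2) by auto using ex_CInt_cont_everywhere.
  ring.
Qed.

Lemma CDeriv_kernel_integral (F Fx : R -> R -> C) (w : R -> C) x :
  (forall x t, CDeriv (fun y => F y t) x (Fx x t)) ->
  (forall x t, Ccont2 F x t) -> (forall x t, Ccont2 Fx x t) -> (forall z, Ccont w z) ->
  CDeriv (fun y => CInt (fun t => F y t * w t) (- y) y) x
    (CInt (fun t => Fx x t * w t) (- x) x + F x (- x)%R * w (- x)%R + F x x * w x).
Proof.
  intros DF CF CFx Cw.
  apply (CDeriv_CInt_sym_param (fun y t => F y t * w t) (fun y t => Fx y t * w t)).
  - intros y t; eapply CDeriv_val; [apply (CDeriv_mult (fun y => F y t)), CDeriv_const; apply DF|].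
    cbv beta; ring.
  - intros; apply Ccont2_mult_snd; auto.
  - intros; apply Ccont2_mult_snd; auto.
Qed.

(** * The intertwining property *)

Section Kernel.

Variables K Kx Kt Kxx Ktt : R -> R -> C.
Hypothesis DKx : forall x t, CDeriv (fun y => K y t) x (Kx x t).
Hypothesis DKt : forall x t, CDeriv (fun s => K x s) t (Kt x t).
Hypothesis DKxx : forall x t, CDeriv (fun y => Kx y t) x (Kxx x t).
Hypothesis DKtt : forall x t, CDeriv (fun s => Kt x s) t (Ktt x t).
Hypothesis CK : forall x t, Ccont2 K x t.
Hypothesis CKx : forall x t, Ccont2 Kx x t.
Hypothesis CKxx : forall x t, Ccont2 Kxx x t.
Hypothesis CKtt : forall x t, Ccont2 Ktt x t.

Definition dTK (w w1 : R -> C) (x : R) : C :=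
  w1 x + (CInt (fun t => Kx x t * w t) (- x) x + K x (- x)%R * w (- x)%R + K x x * w x).

Definition ddTK (w w1 w2 : R -> C) (x : R) : C :=
  w2 x + (CInt (fun t => Kxx x t * w t) (- x) x + Kx x (- x)%R * w (- x)%R + Kx x x * w x)
  + ((Kx x (- x)%R - Kt x (- x)%R) * w (- x)%R - K x (- x)%R * w1 (- x)%R)
  + ((Kx x x + Kt x x) * w x + K x x * w1 x).

Lemma CDeriv_TK (w w1 : R -> C) x :
  (forall x, CDeriv w x (w1 x)) -> CDeriv (TK K w) x (dTK w w1 x).
Proof.
  intros Dw; apply CDeriv_plus; [apply Dw|].
  apply CDeriv_kernel_integral; auto; intro; eapply CDeriv_cont, Dw.
Qed.

Lemma CDeriv_kernel_diagonals (F : R -> C) (dF : R -> C) x :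
  (forall x, CDeriv F x (dF x)) ->
  CDeriv (fun y => K y (- y)%R * F (- y)%R) x
    ((Kx x (- x)%R - Kt x (- x)%R) * F (- x)%R - K x (- x)%R * dF (- x)%R) /\
  CDeriv (fun y => K y y * F y) x ((Kx x x + Kt x x) * F x + K x x * dF x).
Proof.
  intros DF; split; eapply CDeriv_val.
  - apply CDeriv_mult; [|apply (CDeriv_comp F Ropp x _ _ (DF (- x)%R) (is_derive_Ropp x))].
    apply (CDeriv_comp_2d K Kx Kt DKx DKt CKx x Ropp _ (is_derive_Ropp x)).
  - rewrite RtoC_opp1; ring.
  - apply CDeriv_mult; [|apply DF].
    apply (CDeriv_comp_2d K Kx Kt DKx DKt CKx x (fun y => y)); auto_derive; auto.
  - simpl; ring.
Qed.

Lemma CDeriv_dTK (w w1 w2 : R -> C) x :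
  (forall x, CDeriv w x (w1 x)) -> (forall x, CDeriv w1 x (w2 x)) ->
  CDeriv (dTK w w1) x (ddTK w w1 w2 x).
Proof.
  intros Dw Dw1.
  assert (Cw : forall z, Ccont w z) by (intro; eapply CDeriv_cont, Dw).
  destruct (CDeriv_kernel_diagonals w w1 x Dw) as [Dm Dp].
  unfold dTK, ddTK.
  eapply CDeriv_val.
  - apply CDeriv_plus; [apply Dw1|].
    apply CDeriv_plus; [apply CDeriv_plus; [|exact Dm] | exact Dp].
    apply CDeriv_kernel_integral; auto.
  - ring.
Qed.

Lemma CInt_Green (w w1 w2 : R -> C) x :
  (forall x, CDeriv w x (w1 x)) -> (forall x, CDeriv w1 x (w2 x)) -> (forall z, Ccont w2 z) ->
  CInt (fun t => K x t * w2 t) (- x) x =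
  CInt (fun t => Ktt x t * w t) (- x) x
  + ((K x x * w1 x - Kt x x * w x) - (K x (- x)%R * w1 (- x)%R - Kt x (- x)%R * w (- x)%R)).
Proof.
  intros Dw Dw1 Cw2.
  assert (Cw : forall z, Ccont w z) by (intro; eapply CDeriv_cont, Dw).
  assert (Cw1 : forall z, Ccont w1 z) by (intro; eapply CDeriv_cont, Dw1).
  assert (CKs : forall z, Ccont (K x) z) by (intro; apply Ccont2_slice, CK).
  assert (CKtts : forall z, Ccont (Ktt x) z) by (intro; apply Ccont2_slice, CKtt).
  rewrite <- (CInt_FTC (fun t => K x t * w1 t - Kt x t * w t)
                       (fun t => K x t * w2 t - Ktt x t * w t)).
  - rewrite CInt_minus by (apply ex_CInt_cont_everywhere; Ccont_auto); ring.
  - intros t _; eapply CDeriv_val.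
    + apply CDeriv_minus; apply CDeriv_mult; auto.
    + ring.
  - Ccont_auto.
Qed.

Variables (a : R) (q : R -> C).
Hypothesis ha : (0 < a)%R.
Hypothesis Cq : forall z, Ccont q z.
Hypothesis Kpde : forall x t, (Rabs t <= Rabs x <= a)%R -> Kxx x t - q x * K x t = Ktt x t.
Hypothesis Kdiag : forall x, (Rabs x <= a)%R -> K x x = / 2 * CInt q 0 x.
Hypothesis Kanti : forall x, (Rabs x <= a)%R -> K x (- x)%R = 0.

Lemma Goursat_diag_trace x : (- a <= x <= a)%R -> 2 * (Kx x x + Kt x x) = q x.
Proof.
  intros Hx.
  assert (Dd := CDeriv_comp_2d K Kx Kt DKx DKt CKx x (fun y => y) 1%R ltac:(auto_derive; auto)).
  assert (Dq : CDeriv (fun y => / 2 * CInt q 0 y) x (/ 2 * q x)).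
  { eapply CDeriv_val.
    - apply (CDeriv_mult (fun _ => / 2)), CDeriv_CInt_upper, Cq; apply CDeriv_const.
    - ring. }
  assert (E := CDeriv_agree_on (fun y => K y y) _ a x _ _ ha
                 ltac:(intros y Hy; apply Kdiag, Rabs_le; lra) Hx Dd Dq).
  simpl in E; rewrite <- (Cmult_1_l (Kt x x)), E; field.
Qed.

Lemma Goursat_anti_trace x : (- a <= x <= a)%R -> Kx x (- x)%R = Kt x (- x)%R.
Proof.
  intros Hx.
  assert (Dd := CDeriv_comp_2d K Kx Kt DKx DKt CKx x Ropp _ (is_derive_Ropp x)).
  assert (E := CDeriv_agree_on (fun y => K y (- y)%R) (fun _ => 0) a x _ _ ha
                 ltac:(intros y Hy; apply Kanti, Rabs_le; lra) Hx Dd (CDeriv_const 0 x)).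
  rewrite RtoC_opp1 in E.
  rewrite <- (Cplus_0_r (Kt x (- x)%R)), <- E; ring.
Qed.

Lemma abs_le_of_between x t : (Rmin (- x) x < t < Rmax (- x) x)%R -> (Rabs t <= Rabs x)%R.
Proof.
  intro H; unfold Rmin, Rmax in H; apply Rabs_le.
  destruct (Rle_dec (- x) x), (Rle_dec 0 x);
    [rewrite Rabs_pos_eq | rewrite Rabs_left | rewrite Rabs_pos_eq | rewrite Rabs_left]; lra.
Qed.

Lemma TK_intertwines (w w1 w2 : R -> C) x :
  (forall x, CDeriv w x (w1 x)) -> (forall x, CDeriv w1 x (w2 x)) -> (forall z, Ccont w2 z) ->
  (- a <= x <= a)%R ->
  - ddTK w w1 w2 x + q x * TK K w x = TK K (fun t => - w2 t) x.
Proof.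
  intros Dw Dw1 Cw2 Hx.
  assert (Cw : forall z, Ccont w z) by (intro; eapply CDeriv_cont, Dw).
  assert (Cs : forall F, (forall x t, Ccont2 F x t) -> forall z, Ccont (F x) z)
    by (intros; apply Ccont2_slice; auto).
  assert (CKs := Cs K CK); assert (CKxxs := Cs Kxx CKxx); assert (CKtts := Cs Ktt CKtt).
  assert (Hxa : (Rabs x <= a)%R) by (apply Rabs_le; lra).
  assert (PDE : CInt (fun t => Ktt x t * w t) (- x) x =
                CInt (fun t => Kxx x t * w t) (- x) x - q x * CInt (fun t => K x t * w t) (- x) x).
  { rewrite (CInt_ext _ (fun t => Kxx x t * w t - q x * (K x t * w t))).
    - rewrite CInt_minus, CInt_scal by (apply ex_CInt_cont_everywhere; Ccont_auto); reflexivity.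
    - intros t Ht; rewrite <- Kpde by (split; [apply abs_le_of_between|]; auto); ring. }
  unfold TK, ddTK.
  rewrite (CInt_ext (fun t => K x t * - w2 t) (fun t => - (K x t * w2 t))) by (intros; ring).
  rewrite CInt_opp, (CInt_Green w w1 w2), PDE, Goursat_anti_trace,
    <- (Goursat_diag_trace x) by (auto; apply ex_CInt_cont_everywhere; Ccont_auto).
  replace (RtoC 2) with (RtoC 1 + RtoC 1) by (unfold RtoC, Cplus; simpl; f_equal; ring).
  ring.
Qed.

Lemma Top_intertwines h (u u1 u2 : R -> C) :
  (forall x, CDeriv u x (u1 x)) -> (forall x, CDeriv u1 x (u2 x)) -> (forall z, Ccont u2 z) ->
  exists v1 v2 : R -> C,
    (forall x, CDeriv (Top K h u) x (v1 x)) /\ (forall x, CDeriv v1 x (v2 x)) /\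
    (forall x, (- a <= x <= a)%R -> - v2 x + q x * Top K h u x = Top K h (fun t => - u2 t) x) /\
    v1 0%R = u1 0%R + h * u 0%R.
Proof.
  intros Du Du1 Cu2.
  assert (Cu : forall z, Ccont u z) by (intro; eapply CDeriv_cont, Du).
  assert (Cu1 : forall z, Ccont u1 z) by (intro; eapply CDeriv_cont, Du1).
  set (W1 := fun t => u1 t + h / 2 * (u t + u (- t)%R)).
  set (W2 := fun t => u2 t + h / 2 * (u1 t - u1 (- t)%R)).
  assert (DW : forall x, CDeriv (Sh h u) x (W1 x)) by (intro; apply CDeriv_Sh, Du).
  assert (DW1 : forall x, CDeriv W1 x (W2 x)) by (intro; apply CDeriv_dSh; auto).
  assert (CW2 : forall z, Ccont W2 z) by (unfold W2; Ccont_auto; apply Ccont_comp_opp, Cu1).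
  exists (dTK (Sh h u) W1), (ddTK (Sh h u) W1 W2); split; [|split; [|split]].
  - intro x; apply (CDeriv_ext (TK K (Sh h u))); [intro; symmetry; apply Top_factor; auto|].
    apply CDeriv_TK, DW.
  - intro; apply CDeriv_dTK; auto.
  - intros x Hx.
    rewrite !Top_factor, (TK_ext K (Sh h (fun t => - u2 t)) (fun t => - W2 t))
      by (Ccont_auto; apply Sh_opp_second_deriv; auto).
    apply TK_intertwines; auto.
  - assert (K00 : K 0%R 0%R = 0) by (rewrite Kdiag, CInt_point; [ring | rewrite Rabs_R0; lra]).
    unfold dTK, W1, Sh; rewrite Ropp_0, !CInt_point, K00; field.
Qed.

Lemma Top_monomial_ode h k :
  exists V1 V2 : R -> C,
    (forall x, CDeriv (Top K h (fun t => RtoC (t ^ k))) x (V1 x)) /\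
    (forall x, CDeriv V1 x (V2 x)) /\
    (forall x, (- a <= x <= a)%R ->
       V2 x = q x * Top K h (fun t => RtoC (t ^ k)) x
              + RtoC (INR k * INR (k - 1)) * Top K h (fun t => RtoC (t ^ (k - 2))) x) /\
    V1 0%R = RtoC (INR k * 0 ^ (k - 1)) + h * RtoC (0 ^ k).
Proof.
  assert (Du : forall n x, CDeriv (fun t => RtoC (t ^ n)) x (RtoC (INR n * x ^ (n - 1)))).
  { intros n x; eapply CDeriv_val; [apply (CDeriv_ext (fun t => RtoC (1 * t ^ n)))|].
    - intro; rewrite Rmult_1_l; reflexivity.
    - apply CDeriv_RtoC_monomial.
    - f_equal; ring. }
  assert (Du1 : forall x, CDeriv (fun t => RtoC (INR k * t ^ (k - 1))) x
                            (RtoC (INR k * INR (k - 1) * x ^ (k - 2)))).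
  { intro x; eapply CDeriv_val; [apply CDeriv_RtoC_monomial|].
    replace (k - 1 - 1)%nat with (k - 2)%nat by lia; f_equal; ring. }
  destruct (Top_intertwines h _ _ _ (Du k) Du1) as (V1 & V2 & D1 & D2 & E & V10).
  { intro; eapply CDeriv_cont, CDeriv_RtoC_monomial. }
  exists V1, V2; split; [exact D1 | split; [exact D2 | split; [|exact V10]]].
  intros x Hx; specialize (E x Hx).
  rewrite (Top_ext K h (fun t => - RtoC (INR k * INR (k - 1) * t ^ (k - 2)))
             (fun t => - RtoC (INR k * INR (k - 1)) * RtoC (t ^ (k - 2)))),
    (Top_scal K h (fun t => RtoC (t ^ (k - 2)))) in E.
  - set (P := Top K h (fun t => RtoC (t ^ k)) x) in *.
    replace (V2 x) with (q x * P - (- V2 x + q x * P)) by ring.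
    rewrite E; ring.
  - exact CK.
  - intro; eapply CDeriv_cont, Du.
  - intro t; unfold RtoC, Copp, Cmult; simpl; f_equal; ring.
Qed.

End Kernel.

(** * Images of the monomials *)

Lemma Xtil_succ_base (f : R -> C) x0 m : Xtil f x0 (S m) x0 = 0.
Proof. simpl; rewrite CInt_point; ring. Qed.

Lemma Xn_succ_base (f : R -> C) x0 m : Xn f x0 (S m) x0 = 0.
Proof. simpl; rewrite CInt_point; ring. Qed.

Section Monomial_images.

Variables (a : R) (q f f1 f2 : R -> C) (P : nat -> R -> C).
Hypothesis ha : (0 < a)%R.
Hypothesis Df : forall x, CDeriv f x (f1 x).
Hypothesis Df1 : forall x, CDeriv f1 x (f2 x).
Hypothesis Hf2 : forall x, (- a <= x <= a)%R -> f2 x = q x * f x.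
Hypothesis Hnz : forall x, (- a <= x <= a)%R -> f x <> 0.
Hypothesis Hf0 : f 0%R = 1.
(* For [k < 2] the factor [k (k - 1)] vanishes, so the truncated [k - 2] is harmless. *)
Hypothesis P_ode : forall k, exists V1 V2 : R -> C,
  (forall x, CDeriv (P k) x (V1 x)) /\ (forall x, CDeriv V1 x (V2 x)) /\
  (forall x, (- a <= x <= a)%R ->
     V2 x = q x * P k x + RtoC (INR k * INR (k - 1)) * P (k - 2)%nat x) /\
  V1 0%R = RtoC (INR k * 0 ^ (k - 1)) + f1 0%R * RtoC (0 ^ k).
Hypothesis P_at_0 : forall k, P k 0%R = RtoC (0 ^ k).

Lemma weights_cont : exists b, (a < b)%R /\ forall x, (- b < x < b)%R ->
  Ccont (fun s => f s * f s) x /\ Ccont (fun s => / (f s * f s)) x.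
Proof.
  destruct (neq0_on_larger_interval f a ha (fun z => CDeriv_cont _ _ _ (Df z)) Hnz)
    as (b & Hab & Hb).
  exists b; split; [exact Hab|]; intros x Hx.
  assert (D := CDeriv_mult f f x _ _ (Df x) (Df x)).
  split; [eapply CDeriv_cont, D|].
  eapply CDeriv_cont, CDeriv_inv; [exact D|].
  intro E; apply (Hb x Hx).
  replace (f x) with (f x * f x * / f x) by (field; apply Hb, Hx).
  rewrite E; ring.
Qed.

Lemma Xtil_derive m x : (- a <= x <= a)%R ->
  CDeriv (Xtil f 0 (S m)) x
    (RtoC (INR (S m)) * (Xtil f 0 m x * (if Nat.even m then f x * f x else / (f x * f x)))).
Proof.
  intros Hx; destruct weights_cont as (b & Hab & Hw).
  apply (CDeriv_weighted_chain b (Xtil f 0)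
           (fun m s => if Nat.even m then f s * f s else / (f s * f s))); auto; try lra.
  intros n y Hy; destruct (Nat.even n); apply Hw, Hy.
Qed.

Lemma Xn_derive m x : (- a <= x <= a)%R ->
  CDeriv (Xn f 0 (S m)) x
    (RtoC (INR (S m)) * (Xn f 0 m x * (if Nat.even m then / (f x * f x) else f x * f x))).
Proof.
  intros Hx; destruct weights_cont as (b & Hab & Hw).
  apply (CDeriv_weighted_chain b (Xn f 0)
           (fun m s => if Nat.even m then / (f s * f s) else f s * f s)); auto; try lra.
  intros n y Hy; destruct (Nat.even n); apply Hw, Hy.
Qed.

Lemma P0_eq x : (- a <= x <= a)%R -> P 0 x = f x.
Proof.
  destruct (P_ode 0) as (V1 & V2 & D1 & D2 & E & V10).
  intros Hx; rewrite (reduction_of_order a q f f1 f2 (P 0) V1 V2 (fun _ => 0) (fun _ => 0)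
                        (fun _ => 1) ha Df Df1 Hf2 Hnz D1 D2); auto.
  - ring.
  - intros y Hy; rewrite E by exact Hy; simpl; rewrite Rmult_0_l; ring.
  - intros y Hy; eapply CDeriv_val; [apply CDeriv_const | ring].
  - rewrite V10, P_at_0, Hf0; apply injective_projections; simpl; ring.
  - intros y Hy; eapply CDeriv_val; [apply CDeriv_const | unfold Cdiv; ring].
  - rewrite P_at_0, Hf0; simpl; field.
Qed.

Lemma P1_eq x : (- a <= x <= a)%R -> P 1 x = f x * Xn f 0 1 x.
Proof.
  destruct (P_ode 1) as (V1 & V2 & D1 & D2 & E & V10).
  intros Hx; apply (reduction_of_order a q f f1 f2 (P 1) V1 V2 (fun _ => 0) (fun _ => 1)
                        (Xn f 0 1) ha Df Df1 Hf2 Hnz D1 D2); auto.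
  - intros y Hy; rewrite E by exact Hy; simpl; rewrite Rmult_0_r; ring.
  - intros y Hy; eapply CDeriv_val; [apply CDeriv_const | ring].
  - rewrite V10, P_at_0, Hf0; apply injective_projections; simpl; ring.
  - intros y Hy; eapply CDeriv_val; [apply (Xn_derive 0 y Hy) | simpl; unfold Cdiv; ring].
  - rewrite P_at_0, Hf0; simpl; rewrite CInt_point, Rmult_0_l; field.
Qed.

Lemma PSS_eq m (X : nat -> R -> C) :
  (forall x, (- a <= x <= a)%R -> P m x = f x * X m x) ->
  (forall x, (- a <= x <= a)%R ->
     CDeriv (X (S m)) x (RtoC (INR (S m)) * (X m x * (f x * f x)))) ->
  (forall x, (- a <= x <= a)%R ->
     CDeriv (X (S (S m))) x (RtoC (INR (S (S m))) * (X (S m) x * / (f x * f x)))) ->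
  X (S m) 0%R = 0 -> X (S (S m)) 0%R = 0 ->
  forall x, (- a <= x <= a)%R -> P (S (S m)) x = f x * X (S (S m)) x.
Proof.
  intros HPm DX1 DX2 X10 X20.
  destruct (P_ode (S (S m))) as (V1 & V2 & D1 & D2 & E & V10).
  replace (S (S m) - 1)%nat with (S m) in * by lia.
  replace (S (S m) - 2)%nat with m in * by lia.
  assert (Z1 : (0 ^ S m = 0)%R) by (apply pow_i; lia).
  assert (Z2 : (0 ^ S (S m) = 0)%R) by (apply pow_i; lia).
  apply (reduction_of_order a q f f1 f2 _ V1 V2
           (fun y => RtoC (INR (S (S m)) * INR (S m)) * X m y)
           (fun y => RtoC (INR (S (S m))) * X (S m) y) _ ha Df Df1 Hf2 Hnz D1 D2).
  - intros y Hy; rewrite E, HPm by exact Hy; ring.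
  - intros y Hy; eapply CDeriv_val.
    + apply (CDeriv_mult (fun _ => _)); [apply CDeriv_const | apply DX1, Hy].
    + rewrite RtoC_mult; ring.
  - rewrite X10, V10, P_at_0, Hf0, Z1, Z2; apply injective_projections; simpl; ring.
  - intros y Hy; eapply CDeriv_val; [apply DX2, Hy | unfold Cdiv; ring].
  - rewrite X20, P_at_0, Hf0, Z2; field.
Qed.

Lemma P_eq_phik k x : (- a <= x <= a)%R -> P k x = phik f 0 k x.
Proof.
  revert x.
  cut ((forall x, (- a <= x <= a)%R -> P k x = phik f 0 k x) /\
       (forall x, (- a <= x <= a)%R -> P (S k) x = phik f 0 (S k) x)); [tauto|].
  induction k as [|m [IHm IHSm]].
  - split; intros x Hx; unfold phik; simpl.
    + rewrite P0_eq by exact Hx; ring.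
    + apply P1_eq, Hx.
  - split; [exact IHSm|].
    assert (Ev : Nat.even (S m) = negb (Nat.even m)) by (rewrite Nat.even_succ; reflexivity).
    unfold phik in *; change (Nat.odd (S (S m))) with (Nat.odd m).
    unfold Nat.odd in *; destruct (Nat.even m) eqn:Em; cbn [negb] in *.
    + apply (PSS_eq m (Xtil f 0)); auto using Xtil_succ_base.
      * intros; eapply CDeriv_val; [apply Xtil_derive; auto | now rewrite Em].
      * intros; eapply CDeriv_val; [apply Xtil_derive; auto | now rewrite Ev].
    + apply (PSS_eq m (Xn f 0)); auto using Xn_succ_base.
      * intros; eapply CDeriv_val; [apply Xn_derive; auto | now rewrite Em].
      * intros; eapply CDeriv_val; [apply Xn_derive; auto | now rewrite Ev].
Qed.

End Monomial_images.

Theorem mainTheorem4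
  (a : R) (ha : (0 < a)%R)
  (q q1 : R -> C) (hq : cfun_C1 q q1)
  (f f1 f2 : R -> C) (hf : cfun_C2 f f1 f2)
  (hf_eq : forall x, (- a <= x <= a)%R -> f2 x - q x * f x = 0)
  (hf_nz : forall x, (- a <= x <= a)%R -> f x <> 0)
  (hf0 : f 0%R = 1)
  (K Kxx Ktt : R -> R -> C) (hK : cfun2_C2 K Kxx Ktt)
  (hK_pde : forall x t, (Rabs t <= Rabs x <= a)%R ->
       Kxx x t - q x * K x t = Ktt x t)
  (hK_diag : forall x, (Rabs x <= a)%R -> K x x = / 2 * CInt q 0 x)
  (hK_anti : forall x, (Rabs x <= a)%R -> K x (- x)%R = 0) :
  let h := f1 0%R in
  (forall (k : nat) (x : R), (- a <= x <= a)%R ->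
     Top K h (fun t => RtoC (t ^ k)) x = phik f 0 k x)
  /\
  (forall u u1 u2 : R -> C, cfun_C2 u u1 u2 ->
     exists v1 v2 : R -> C,
       (forall x, CDeriv (Top K h u) x (v1 x)) /\
       (forall x, CDeriv v1 x (v2 x)) /\
       (forall x, (- a <= x <= a)%R ->
          - v2 x + q x * Top K h u x = Top K h (fun t => - u2 t) x)).
Proof.
  intros h.
  destruct hq as [Dq _], hf as (Df & Df1 & _).
  assert (Cq : forall z, Ccont q z) by (intro; eapply CDeriv_cont, Dq).
  assert (Hf2 : forall x, (- a <= x <= a)%R -> f2 x = q x * f x)
    by (intros x Hx; rewrite <- (Cplus_0_r (q x * f x)), <- (hf_eq x Hx); ring).
  destruct hK as (Kx & Kt & Kxt & Ktx & DKx & DKt & DKxx & _ & _ & DKtt & CKs).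
  assert (CK : forall x t, Ccont2 K x t) by apply CKs.
  assert (CKx : forall x t, Ccont2 Kx x t) by apply CKs.
  assert (CKxx : forall x t, Ccont2 Kxx x t) by apply CKs.
  assert (CKtt : forall x t, Ccont2 Ktt x t) by apply CKs.
  split.
  - intros k x Hx.
    apply (P_eq_phik a q f f1 f2 (fun k => Top K h (fun t => RtoC (t ^ k)))); auto.
    + intro n; apply (Top_monomial_ode K Kx Kt Kxx Ktt); auto.
    + intro n; apply Top_at_0.
  - intros u u1 u2 (Du & Du1 & Cu2).
    edestruct (Top_intertwines K Kx Kt Kxx Ktt) with (a := a) (q := q) (h := h) (u := u)
      as (v1 & v2 & D1 & D2 & E & _); eauto.
Qed.
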